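(* Let $n\geq 3$, and let $G_1$ and $G_2$ be the $n$-vertex triangulations defined as follows. $G_1$ is obtained from a triangulation $H$ with $\lfloor n/3\rfloor+2$ vertices and maximum degree at most six by inserting, into each face of $H$ with exactly $r$ exceptions, a new vertex adjacent to the three vertices of that face, where $r=0,1,2$ according as $n\equiv 2,1,0\pmod 3$. $G_2$ is obtained from a path on $n-2$ vertices by adding two vertices $a,b$, joining each of them to every path vertex, and adding the edge $(a,b)$. Then any sequence of flips transforming $G_1$ into a triangulation isomorphic to $G_2$ has length at least $3n-6-2\lfloor n/3\rfloor-28\geq \frac{7n}{3}-34$.
   Context: A triangulation means a simple combinatorial triangulation: a maximal planar graph without self-loops or multiple edges, together with a fixed rotation system; all faces are triangles. Flipping an edge $(a,b)$: removing $(a,b)$ leaves a unique quadrilateral face bounded by a cycle $(a,a',b,b')$, and the flip replaces $(a,b)$ by $(a',b')$; only flips keeping the triangulation simple are allowed. *)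

(* Combinatorial triangulations of the sphere on a finite
   vertex type T, represented by their set of oriented faces: a face with
   counterclockwise boundary a -> b -> c is stored as all three rotations
   (a,b,c), (b,c,a), (c,a,b). The triple (a,b,c) is equivalently the dart
   (a,b) together with the third vertex c of the face to its left; for each
   vertex v, the map u |-> w with (v,u,w) in F is the rotation system at v. *)
From HB Require Import structures.
From mathcomp Require Import all_boot all_order all_algebra perm.
Set Implicit Arguments. Unset Strict Implicit. Unset Printing Implicit Defensive.

Section Tri.
Variable T : finType.

Definition rot3 (t : T * T * T) : T * T * T :=
  let: (a, b, c) := t in (b, c, a).

Definition rots (t : T * T * T) : {set T * T * T} :=
  [set t; rot3 t; rot3 (rot3 t)].

Definition adj (F : {set T * T * T}) : rel T :=
  fun x y => [exists z, (x, y, z) \in F].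

Definition deg (F : {set T * T * T}) (v : T) : nat := #|[set u | adj F v u]|.

Definition is_triangulation (F : {set T * T * T}) : Prop :=
  (forall a b c, (a, b, c) \in F -> [&& a != b, b != c & a != c]) /\
  (forall t, t \in F -> rot3 t \in F) /\
  (* each dart lies on exactly one face (hence no multiple edges) *)
  (forall a b c c', (a, b, c) \in F -> (a, b, c') \in F -> c = c') /\
  (* every edge has two sides, with opposite orientations (oriented surface) *)
  (forall a b c, (a, b, c) \in F -> exists d, (b, a, d) \in F) /\
  (* the rotation at every vertex is a single cycle (a manifold, i.e. a
     genuine rotation system) *)
  (forall v u u', adj F v u -> adj F v u' ->
     connect (fun x y => (v, x, y) \in F) u u') /\
  (forall x y, connect (adj F) x y) /\
  (* Euler: V - E + F = 2, where E = #|F|/2 and #faces = #|F|/3 *)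
  #|F| = 6 * (#|T| - 2).

(* one flip of edge (a,b) with adjacent faces (a,b,c) and (b,a,d):
   the quadrilateral is (a,d,b,c) and the new diagonal is (c,d).
   Only flips keeping the triangulation simple are allowed. *)
Definition flip_step (F F' : {set T * T * T}) : Prop :=
  exists a b c d,
    [/\ (a, b, c) \in F, (b, a, d) \in F, c != d, ~~ adj F c d &
        F' = (F :\: (rots (a, b, c) :|: rots (b, a, d)))
               :|: (rots (c, a, d) :|: rots (d, b, c))] /\
    is_triangulation F'.

Fixpoint flip_reach (k : nat) (F F' : {set T * T * T}) : Prop :=
  match k with
  | 0 => F = F'
  | k'.+1 => exists F'', flip_step F F'' /\ flip_reach k' F'' F'
  end.

Definition graph_iso_to (F : {set T * T * T}) (g : rel T) : Prop :=
  exists s : {perm T}, forall x y, adj F (s x) (s y) = g x y.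

End Tri.

(* G2: path 0 - 1 - ... - (n-3) on the first n-2 vertices, plus the two
   vertices a = n-2 and b = n-1 adjacent to everything (including each other) *)
Definition G2adj (n : nat) : rel 'I_n :=
  fun x y => (x != y) &&
    [|| n - 2 <= x, n - 2 <= y, x.+1 == y | y.+1 == x]%N.

(* number of faces of H left without a new vertex *)
Definition nexc (n : nat) : nat :=
  if n %% 3 == 2 then 0 else if n %% 3 == 1 then 1 else 2.

(* G1 built from H (faces FH on 'I_m), an injective relabelling i of the old
   vertices, a set E of excepted faces (all rotations), and the new vertex
   p s inserted into the face s of H. *)
Definition stacked (n m : nat) (FH E : {set 'I_m * 'I_m * 'I_m})
    (i : 'I_m -> 'I_n) (p : 'I_m * 'I_m * 'I_m -> 'I_n) :
    {set 'I_n * 'I_n * 'I_n} :=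
  [set t | [exists s in FH,
     let: (a, b, c) := s in
     if s \in E then t == (i a, i b, i c)
     else t \in rots (i a, i b, p s)]].

Definition stacking_data (n m : nat) (FH E : {set 'I_m * 'I_m * 'I_m})
    (i : 'I_m -> 'I_n) (p : 'I_m * 'I_m * 'I_m -> 'I_n) : Prop :=
  injective i /\
  E \subset FH /\ (forall t, t \in E -> rot3 t \in E) /\
  (* exactly nexc n faces are excepted (each face = 3 rotations) *)
  #|E| = 3 * nexc n /\
  (forall s, s \in FH -> s \notin E -> p (rot3 s) = p s) /\
  (forall s s', s \in FH -> s' \in FH -> s \notin E -> s' \notin E ->
     p s = p s' -> s' \in rots s) /\
  (forall s x, s \in FH -> s \notin E -> p s != i x) /\
  (forall v, (exists x, v = i x) \/ (exists2 s, s \in FH /\ s \notin E & v = p s)).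

(* Count darts (directed edges).  G1 and every triangulation on n vertices have
   6(n-2) darts, and a flip destroys only the two darts of the flipped edge, so
   after k flips at most 2k darts of G1 are missing from G.  Conversely G1 and G
   share few darts: G1 has maximum degree 12 (an old vertex gains one new
   neighbour per face of H around it, a new vertex has degree 3), so at most 48
   common darts touch the two apexes a, b of G2; every other common dart lies on
   the path of G2 and, as new vertices of G1 are adjacent only to old ones, has
   an old endpoint, which leaves at most 4 (n/3 + 2) of them.  Hence
   6(n-2) - 2k <= 4 (n/3) + 56. *)

From HB Require Import structures.
From mathcomp Require Import all_boot all_order all_algebra perm zify lra.
Import GRing.Theory Num.Theory.
Set Implicit Arguments. Unset Strict Implicit. Unset Printing Implicit Defensive.

Lemma card_bigcup_le (T I : finType) (A : {pred I}) (F : I -> {set T}) :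
  #|\bigcup_(i in A) F i| <= \sum_(i in A) #|F i|.
Proof.
elim/big_rec2: _ => [|i U s _ hU]; first by rewrite cards0.
exact: leq_trans (leq_card_setU _ _) (leq_add (leqnn _) hU).
Qed.

Section Counting.
Variable T : finType.

Lemma card_pairs_fst (r : rel T) (O : {set T}) d :
  (forall x, x \in O -> #|[set y | r x y]| <= d) ->
  #|[set xy | (xy.1 \in O) && r xy.1 xy.2]| <= #|O| * d.
Proof.
move=> hd.
have -> : [set xy | (xy.1 \in O) && r xy.1 xy.2]
          = \bigcup_(x in O) (pair x @: [set y | r x y]).
  apply/setP => -[x y]; rewrite inE /=.
  apply/andP/bigcupP => [[hx hr] | [x' hx' /imsetP [y' hy' [-> ->]]]].
    by exists x => //; apply: imset_f; rewrite inE.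
  by rewrite inE in hy'.
rewrite -sum_nat_const; apply: leq_trans (card_bigcup_le _ _) _.
apply: leq_sum => x hx.
exact: leq_trans (leq_imset_card _ _) (hd _ hx).
Qed.

Definition darts (e : rel T) : {set T * T} := [set xy | e xy.1 xy.2].

Lemma card_common_darts (e1 e2 : rel T) (K O : {set T}) d :
  symmetric e1 -> symmetric e2 ->
  (forall x, #|[set y | e1 x y]| <= d) ->
  (forall x y, e1 x y -> (x \in O) || (y \in O)) ->
  (forall x, x \notin K -> #|[set y | e2 x y & y \notin K]| <= 2) ->
  #|darts e1 :&: darts e2| <= 2 * (#|K| * d) + 2 * (#|O| * 2).
Proof.
move=> e1_sym e2_sym e1_deg e1_O e2_path.
pose Kd := [set xy | (xy.1 \in K) && e1 xy.1 xy.2].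
pose Od := [set xy | (xy.1 \in O :\: K) && (e2 xy.1 xy.2 && (xy.2 \notin K))].
have cardKd : #|Kd| <= #|K| * d by apply: card_pairs_fst => x _; apply: e1_deg.
have cardOd : #|Od| <= #|O| * 2.
  apply: leq_trans _ (leq_mul (subset_leq_card (subsetDl O K)) (leqnn 2)).
  apply: (card_pairs_fst (r := fun x y => e2 x y && (y \notin K))) => x.
  by rewrite inE => /andP [hxK _]; apply: e2_path.
have cover : darts e1 :&: darts e2 \subset
    (Kd :|: swap_pair @: Kd) :|: (Od :|: swap_pair @: Od).
  apply/subsetP => -[x y]; rewrite !inE /= => /andP [h1 h2].
  have swapped (A : {set T * T}) : (y, x) \in A -> (x, y) \in swap_pair @: A.
    by move=> hA; apply/imsetP; exists (y, x).
  have [xK | xK] := boolP (x \in K); first by rewrite h1.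
  have [yK | yK] := boolP (y \in K).
    by rewrite swapped ?orbT // inE /= yK e1_sym.
  have /orP [xO | yO] := e1_O _ _ h1; first by rewrite xO h2 !orbT.
  by rewrite (swapped Od) ?orbT // !inE /= yO yK e2_sym h2 xK.
apply: (leq_trans (subset_leq_card cover)); rewrite !mul2n -!addnn.
apply: leq_trans (leq_card_setU _ _) (leq_add _ _);
  apply: leq_trans (leq_card_setU _ _) (leq_add _ _) => //;
  exact: leq_trans (leq_imset_card _ _) _.
Qed.

End Counting.

Section Triangulations.
Variable T : finType.
Implicit Types F G : {set T * T * T}.

Lemma triangulation_adj_sym F : is_triangulation F -> symmetric (adj F).
Proof.
move=> [_ [_ [_ [opp _]]]].
suff adjC x y : adj F x y -> adj F y x by move=> x y; apply/idP/idP; apply: adjC.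
by move=> /existsP [z /opp [w hw]]; apply/existsP; exists w.
Qed.

Lemma card_faces_mid_le_deg F x :
  is_triangulation F -> #|[set t in F | t.1.2 == x]| <= deg F x.
Proof.
move=> [_ [_ [dart_face [opp _]]]].
rewrite -(@card_in_imset _ _ (fun t => t.1.1)).
  apply: subset_leq_card; apply/subsetP => y /imsetP [[[a b] c]].
  rewrite !inE /= => /andP [abc /eqP eb] ->.
  by have [d hd] := opp _ _ _ abc; apply/existsP; exists d; rewrite -eb.
move=> [[a b] c] [[a' b'] c']; rewrite !inE /= => /andP [abc /eqP eb] /andP [abc' /eqP eb'] ea.
by move: abc'; rewrite -ea eb' -eb => /(dart_face _ _ _ _ abc) ->.
Qed.

Lemma card_darts_triangulation F : is_triangulation F -> #|darts (adj F)| = 6 * (#|T| - 2).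
Proof.
move=> [_ [_ [dart_face [_ [_ [_ <-]]]]]].
have -> : darts (adj F) = (fun t : T * T * T => t.1) @: F.
  apply/setP => -[x y]; rewrite inE; apply/existsP/imsetP => [[z hz] | [[xy z] hz ->]].
    by exists (x, y, z).
  by exists z.
apply: card_in_imset => -[[a b] c] [[a' b'] c'] h h' /= [ea eb].
by move: h'; rewrite -ea -eb => /(dart_face _ _ _ _ h) ->.
Qed.

Lemma flip_step_darts F F' : flip_step F F' ->
  exists a b, darts (adj F) :\: darts (adj F') \subset [set (a, b); (b, a)].
Proof.
case=> [a [b [c [d [[abc bad _ _ ->] _]]]]]; exists a, b.
apply/subsetP => -[x y]; rewrite !inE /= => /andP [/existsPn lost /existsP [z hz]].
have [removed | kept] := boolP ((x, y, z) \in rots (a, b, c) :|: rots (b, a, d)); last first.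
  by have := lost z; rewrite in_setU in_setD kept hz.
move: removed; rewrite !inE /= -!orbA.
case/or4P=> [|||/orP[|/orP[|]]] /eqP[ex ey _]; subst x y; rewrite ?eqxx ?orbT //.
(* the other four darts of the quadrilateral survive in (c, a, d) and (d, b, c) *)
- by case/negP: (lost d); rewrite !inE /= eqxx !orbT.
- by case/negP: (lost d); rewrite !inE /= eqxx !orbT.
- by case/negP: (lost c); rewrite !inE /= eqxx !orbT.
- by case/negP: (lost c); rewrite !inE /= eqxx !orbT.
Qed.

Lemma card_darts_lost_flip_reach k F G :
  flip_reach k F G -> #|darts (adj F) :\: darts (adj G)| <= 2 * k.
Proof.
elim: k F => [|k IH] F /=; first by move=> ->; rewrite setDv cards0.
case=> F' [/flip_step_darts [a [b lost]] /IH lost_after].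
have split_lost : darts (adj F) :\: darts (adj G) \subset
    (darts (adj F) :\: darts (adj F')) :|: (darts (adj F') :\: darts (adj G)).
  by apply/subsetP => xy; rewrite !inE; case: (adj F' _ _); case/andP=> -> ->.
apply: (leq_trans (subset_leq_card split_lost)); apply: (leq_trans (leq_card_setU _ _)).
rewrite mulnS; apply: leq_add lost_after.
by apply: leq_trans (subset_leq_card lost) _; rewrite cards2; case: (_ != _).
Qed.

End Triangulations.

Section Stacked.
Variables (n m : nat) (FH E : {set 'I_m * 'I_m * 'I_m}) (i : 'I_m -> 'I_n)
  (p : 'I_m * 'I_m * 'I_m -> 'I_n).
Local Notation G1 := (stacked FH E i p).

Lemma stacked_face_origin t : t \in G1 -> exists a b c, (a, b, c) \in FH /\
  (if (a, b, c) \in E then t = (i a, i b, i c) else t \in rots (i a, i b, p (a, b, c))).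
Proof.
rewrite inE => /exists_inP [[[a b] c] abc h]; exists a, b, c; split => //.
by move: h; case: ifP => _ // /eqP.
Qed.

Lemma stacked_adj_old u v : adj G1 u v -> (u \in codom i) || (v \in codom i).
Proof.
move=> /existsP [w /stacked_face_origin [a [b [c [_]]]]].
case: ifP => _; first by case=> -> _ _; rewrite codom_f.
by rewrite !inE /= -!orbA => /or3P [] /eqP [-> -> _]; rewrite codom_f ?orbT.
Qed.

Hypothesis i_inj : injective i.
Hypothesis p_new : forall s x, s \in FH -> s \notin E -> p s != i x.
Hypothesis p_faces : forall s s', s \in FH -> s' \in FH -> s \notin E -> s' \notin E ->
  p s = p s' -> s' \in rots s.

Lemma deg_stacked_old x : is_triangulation FH -> deg G1 (i x) <= 2 * deg FH x.
Proof.
move=> triFH; pose N := [set y | adj FH x y]; pose S := [set t in FH | t.1.2 == x].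
have nbrs : [set y | adj G1 (i x) y] \subset (i @: N) :|: (p @: S).
  apply/subsetP => y; rewrite in_setU inE.
  move=> /existsP [z /stacked_face_origin [a [b [c [abc]]]]].
  have old_nbr : a = x -> y = i b -> (y \in i @: N) || (y \in p @: S).
    by move=> ax ->; rewrite imset_f // inE -ax; apply/existsP; exists c.
  case: ifP => abcE; first by case=> /i_inj ea ey _; apply: old_nbr.
  rewrite !inE /= -!orbA => /or3P [] /eqP [xa yb _].
  - exact: old_nbr (esym (i_inj xa)) yb.
  - by rewrite yb orbC imset_f // inE abc /= (i_inj xa).
  - by have := p_new x abc (negbT abcE); rewrite xa eqxx.
apply: leq_trans (subset_leq_card nbrs) _; rewrite mul2n -addnn.
apply: leq_trans (leq_card_setU _ _) (leq_add (leq_imset_card _ _) _).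
exact: leq_trans (leq_imset_card _ _) (card_faces_mid_le_deg x triFH).
Qed.

Lemma deg_stacked_new s : s \in FH -> s \notin E -> deg G1 (p s) <= 3.
Proof.
case: s => [[a b] c] abc abcE.
suff nbrs : [set y | adj G1 (p (a, b, c)) y] \subset [:: i a; i b; i c].
  exact: leq_trans (subset_leq_card nbrs) (card_size _).
apply/subsetP => y; rewrite inE => /existsP [z /stacked_face_origin [a' [b' [c' [abc']]]]].
case: ifP => abcE'; first by case=> e _ _; have := p_new a' abc abcE; rewrite e eqxx.
rewrite !inE /= -!orbA => /or3P [] /eqP [e ey _].
- by have := p_new a' abc abcE; rewrite e eqxx.
- by have := p_new b' abc abcE; rewrite e eqxx.
have := p_faces abc abc' abcE (negbT abcE') e.
by rewrite !inE /= -!orbA ey => /or3P [] /eqP [-> _ _]; rewrite eqxx ?orbT.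
Qed.

End Stacked.

Lemma deg_stacked n m (FH E : {set 'I_m * 'I_m * 'I_m}) (i : 'I_m -> 'I_n)
    (p : 'I_m * 'I_m * 'I_m -> 'I_n) D v :
  is_triangulation FH -> (forall x, deg FH x <= D) -> stacking_data FH E i p ->
  deg (stacked FH E i p) v <= maxn 3 (2 * D).
Proof.
move=> triFH degFH [i_inj [_ [_ [_ [_ [p_faces [p_new all_vertices]]]]]]].
have [[x ->] | [s [sFH sE] ->]] := all_vertices v.
  rewrite leq_max; apply/orP; right.
  exact: leq_trans (deg_stacked_old i_inj p_new x triFH) (leq_mul (leqnn 2) (degFH x)).
by rewrite leq_max deg_stacked_new.
Qed.

Definition G2apex n : {set 'I_n} := [set y : 'I_n | n - 2 <= y].

Lemma card_G2apex n : #|G2apex n| <= 2.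
Proof.
pose shift (y : 'I_n) : 'I_2 := inord (y - (n - 2)).
rewrite -(card_ord 2) -(@card_in_imset _ _ shift (G2apex n)).
  exact: max_card.
move=> y y'; rewrite !inE => hy hy'.
have := ltn_ord y; have := ltn_ord y' => ylt' ylt /(congr1 (@nat_of_ord 2)).
by rewrite !inordK => *; [apply: ord_inj; lia | lia | lia].
Qed.

Lemma G2adj_sym n : symmetric (@G2adj n).
Proof. by move=> x y; rewrite /G2adj eq_sym orbCA [_ || (y.+1 == x)]orbC. Qed.

Lemma card_G2adj_off_apex n (x : 'I_n) :
  x \notin G2apex n -> #|[set y | G2adj x y & y \notin G2apex n]| <= 2.
Proof.
(* the path neighbours x - 1 and x + 1 are told apart by comparison with x *)
rewrite inE -ltnNge => xpath.
rewrite -card_bool -(@card_in_imset _ bool (fun y : 'I_n => x < y)).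
  exact: max_card.
move=> y y'; rewrite !inE /G2adj -!ltnNge => /andP [/andP [_ hy] ypath].
move=> /andP [/andP [_ hy'] ypath'] e; apply: ord_inj.
by move: e; case/or4P: hy; case/or4P: hy'; lia.
Qed.

Lemma card_nbrs_off_iso (T : finType) (F : {set T * T * T}) (g : rel T) (s : {perm T})
    (K : {set T}) x :
  (forall x y, adj F (s x) (s y) = g x y) ->
  #|[set y | adj F (s x) y & y \notin s @: K]| = #|[set y | g x y & y \notin K]|.
Proof.
move=> iso; apply: esym; rewrite -(card_imset _ (@perm_inj _ s)).
apply: eq_card => y; rewrite -[y](permKV s) (mem_imset _ _ perm_inj) !inE iso.
by rewrite (mem_imset _ _ perm_inj).
Qed.

Lemma card_common_darts_stacked_G2 n m (FH E : {set 'I_m * 'I_m * 'I_m})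
    (i : 'I_m -> 'I_n) (p : 'I_m * 'I_m * 'I_m -> 'I_n) (G : {set 'I_n * 'I_n * 'I_n})
    (s : {perm 'I_n}) :
  is_triangulation FH -> (forall x, deg FH x <= 6) -> stacking_data FH E i p ->
  is_triangulation (stacked FH E i p) -> (forall x y, adj G (s x) (s y) = G2adj x y) ->
  #|darts (adj (stacked FH E i p)) :&: darts (adj G)| <= 4 * m + 48.
Proof.
move=> triFH degFH data triG1 iso.
have adjG x y : adj G x y = G2adj (s^-1 x)%g (s^-1 y)%g by rewrite -iso !permKV.
have cardK : #|s @: G2apex n| <= 2 by rewrite card_imset ?card_G2apex //; apply: perm_inj.
have cardO : #|[set v in codom i]| = m by rewrite cardsE card_codom ?card_ord //; case: data.
apply: leq_trans (card_common_darts (K := s @: G2apex n) (O := [set v in codom i]) (d := 12)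
                    _ _ _ _ _) _.
- exact: triangulation_adj_sym.
- by move=> x y; rewrite !adjG G2adj_sym.
- by move=> v; apply: (deg_stacked v triFH degFH data).
- by move=> x y; rewrite !inE; apply: stacked_adj_old.
- move=> x; rewrite -[x](permKV s) (mem_imset _ _ perm_inj) (card_nbrs_off_iso _ _ iso).
  exact: card_G2adj_off_apex.
- by rewrite cardO; lia.
Qed.

Lemma seven_thirds_le (n q : nat) : 3 * q <= n ->
  ((7 * n)%:R / 3 - 34 <= ((3 * n)%:Z - 6 - (2 * q)%:Z - 28)%:~R :> rat)%R.
Proof.
rewrite -(ler_nat rat) => h3q.
rewrite !intrD !mulrNz !natrM -!pmulrn !natrM in h3q *; lra.
Qed.

Theorem mainTheorem5 (n : nat) (hn : (3 <= n)%N)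
  (FH E : {set 'I_(n %/ 3 + 2) * 'I_(n %/ 3 + 2) * 'I_(n %/ 3 + 2)})
  (i : 'I_(n %/ 3 + 2) -> 'I_n)
  (p : 'I_(n %/ 3 + 2) * 'I_(n %/ 3 + 2) * 'I_(n %/ 3 + 2) -> 'I_n)
  (G1 : {set 'I_n * 'I_n * 'I_n}) :
  is_triangulation FH ->
  (forall v, (deg FH v <= 6)%N) ->
  stacking_data FH E i p ->
  G1 = stacked FH E i p ->
  is_triangulation G1 ->
  forall (k : nat) (G : {set 'I_n * 'I_n * 'I_n}),
    flip_reach k G1 G -> graph_iso_to G (@G2adj n) ->
    ((3 * n)%:Z - 6 - (2 * (n %/ 3))%:Z - 28 <= k%:Z)%R /\
    ((7 * n)%:R / 3 - 34 <= ((3 * n)%:Z - 6 - (2 * (n %/ 3))%:Z - 28)%:~R :> rat)%R.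
Proof.
move=> triFH degFH data -> triG1 k G reach [s iso].
split; last by apply: seven_thirds_le; rewrite mulnC leq_divM.
have lost := card_darts_lost_flip_reach reach.
have common := card_common_darts_stacked_G2 triFH degFH data triG1 iso.
have := cardsID (darts (adj G)) (darts (adj (stacked FH E i p))).
rewrite card_darts_triangulation // card_ord; lia.
Qed.
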